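(* Let $F$ be a diagonal matching rule for $G$ and let $M$ be the prefix matching generated by $F$. If $M$ is a Morse matching, then $G$ is diagonal.
   Context: $G$ is a finite simple connected graph with shortest-path distance $d$; $\ell(x_0,\dots,x_k)=\sum_{i=0}^{k-1}d(x_i,x_{i+1})$. The magnitude chain complex $\mathrm{MC}_{k,l}(G)$ is the free abelian group on $I_{k,l}(G)=\{(x_0,\dots,x_k)\in V(G)^{k+1}:x_i\ne x_{i+1}\ \forall i,\ \ell=l\}$ with differential $\partial=\sum_{i=1}^{k-1}(-1)^i\partial_i$, where $\partial_i$ deletes $x_i$ if this does not change $\ell$ and is $0$ otherwise; $\mathrm{MH}_{k,l}(G)=H_k(\mathrm{MC}_{*,l}(G))$; $G$ is diagonal if $\mathrm{MH}_{k,l}(G)=0$ for $k\ne l$. Elements of $I_{k,l}(G)$ are called sequences. $\Gamma$ is the directed graph on sequences with an edge $a\to b$ whenever $\partial_i a=b\neq0$ for some $i$. A matching is a set of pairwise vertex-disjoint edges of $\Gamma$; $\Gamma^M$ is $\Gamma$ with edges of $M$ reversed; $M$ is Morse if $\Gamma^M$ has no directed cycle. Matching states: ''unmatched'', ''insert$(i,v)$'' (matched to $(x_0,\dots,x_i,v,x_{i+1},\dots,x_k)$), ''delete$(i)$'' (matched to $(x_0,\dots,\hat x_i,\dots,x_k)$). A prefix matching: whenever $(x_0,\dots,x_k)$ has state insert$(i,v)$ (resp. delete$(i)$), every sequence $(x_0,\dots,x_{i+1},y_{i+2},\dots,y_{k'})$ has the same state. A matching rule is a function $F$ from sequences to $\{\epsilon\}\cup\{\iota(v):v\in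 V(G)\}\cup\{\delta\}$; a prefix matching $M$ is generated by $F$ if for every sequence $(x_0,\dots,x_k)$, $k\ge1$, with unmatched prefix $(x_0,\dots,x_{k-1})$, its state is insert$(k-1,v)$ iff $F(x_0,\dots,x_k)=\iota(v)$ and delete$(k-1)$ iff $F(x_0,\dots,x_k)=\delta$. $F$ is valid if (1) $F(x_0,\dots,x_k)=\iota(v)$ implies $v\notin\{x_{k-1},x_k\}$, $d(x_{k-1},v)+d(v,x_k)=d(x_{k-1},x_k)$, $F(x_0,\dots,x_{k-1},v)=\epsilon$, $F(x_0,\dots,x_{k-1},v,x_k)=\delta$; (2) $F(x_0,\dots,x_k)=\delta$ implies $d(x_{k-2},x_{k-1})+d(x_{k-1},x_k)=d(x_{k-2},x_k)$ and $F(x_0,\dots,x_{k-2},x_k)=\iota(x_{k-1})$. A valid $F$ is diagonal if, w.r.t. the prefix matching it generates, $F(x_0,\dots,x_k)\ne\epsilon$ for every sequence with unmatched prefix $(x_0,\dots,x_{k-1})$ and $d(x_{k-1},x_k)\ge2$. *)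

From HB Require Import structures.
From mathcomp Require Import all_boot all_order all_algebra.
Set Implicit Arguments. Unset Strict Implicit. Unset Printing Implicit Defensive.
Import Order.TTheory GRing.Theory Num.Theory.

Section MagDefs.
Variables (V : finType) (e : rel V).

Definition simple_graph := symmetric e /\ irreflexive e.
Definition connected_graph := forall x y : V, connect e x y.

Definition reach (n : nat) (x : V) : {set V} :=
  iter n (fun S : {set V} => S :|: [set y | [exists z in S, e z y]]) [set x].

(* shortest-path distance: least n with y in the n-ball of x
   (meaningful for connected graphs, where it is < #|V|) *)
Definition dist (x y : V) : nat :=
  find (fun n => y \in reach n x) (iota 0 #|V|).

Definition ell (x : seq V) : nat :=
  if x is a :: s then sumn (pairmap dist a s) else 0.

Definition is_seq (x : seq V) : bool :=
  if x is a :: s then path (fun u w => u != w) a s else false.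

Definition Iseq (k l : nat) : seq (seq V) :=
  [seq s <- map (@tval k.+1 V) (enum {: k.+1.-tuple V}) | is_seq s && (ell s == l)].

(* (x_0,..,^x_i,..,x_k) and (x_0,..,x_i,v,x_{i+1},..,x_k) *)
Definition del (x : seq V) (i : nat) : seq V := take i x ++ drop i.+1 x.
Definition ins (x : seq V) (i : nat) (v : V) : seq V :=
  take i.+1 x ++ v :: drop i.+1 x.

(* d_i x = y  (nonzero) *)
Definition face (x : seq V) (i : nat) (y : seq V) : bool :=
  (ell (del x i) == ell x) && (del x i == y).

(* the differential of MC_{*,l} on a degree-k chain c (Z-valued function
   on sequences, supported on I_{k,l}) evaluated at y *)
Definition bdry (k l : nat) (c : seq V -> int) (y : seq V) : int :=
  \sum_(x <- Iseq k l) \sum_(1 <= i < k)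
     ((-1) ^+ i * c x * (face x i y)%:R)%R.

Definition supported (k l : nat) (c : seq V -> int) : Prop :=
  forall x, c x != 0%R -> x \in Iseq k l.

Definition MH_vanishes (k l : nat) : Prop :=
  forall c : seq V -> int, supported k l c -> (forall y, bdry k l c y = 0%R) ->
  exists b : seq V -> int, supported k.+1 l b /\ forall y, bdry k.+1 l b y = c y.

Definition diagonal_graph : Prop := forall k l, k <> l -> MH_vanishes k l.

Definition Gamma (a b : seq V) : Prop :=
  is_seq a /\ exists i, 0 < i /\ i.+1 < size a /\ face a i b.

Definition is_matching (M : seq V -> seq V -> Prop) : Prop :=
  (forall a b, M a b -> Gamma a b) /\
  (forall a b a' b', M a b -> M a' b' ->
     (a = a' \/ a = b' \/ b = a' \/ b = b') -> a = a' /\ b = b').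

Definition GammaM (M : seq V -> seq V -> Prop) (a b : seq V) : Prop :=
  (Gamma a b /\ ~ M a b) \/ M b a.

Definition is_Morse (M : seq V -> seq V -> Prop) : Prop :=
  ~ exists (n : nat) (f : nat -> seq V),
      0 < n /\ f n = f 0 /\ forall i, i < n -> GammaM M (f i) (f i.+1).

Definition unmatched (M : seq V -> seq V -> Prop) (x : seq V) : Prop :=
  forall y, ~ M x y /\ ~ M y x.
Definition st_ins (M : seq V -> seq V -> Prop) (x : seq V) (i : nat) (v : V) : Prop :=
  i.+1 < size x /\ M (ins x i v) x.
Definition st_del (M : seq V -> seq V -> Prop) (x : seq V) (i : nat) : Prop :=
  0 < i /\ i.+1 < size x /\ M x (del x i).

Definition prefix_matching (M : seq V -> seq V -> Prop) : Prop :=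
  (forall x i v, is_seq x -> st_ins M x i v ->
     forall y, is_seq y -> i.+2 <= size y -> take i.+2 y = take i.+2 x ->
       st_ins M y i v) /\
  (forall x i, is_seq x -> st_del M x i ->
     forall y, is_seq y -> i.+2 <= size y -> take i.+2 y = take i.+2 x ->
       st_del M y i).

Inductive rule_val := Eps | Iota of V | Delta.

Definition generated_by (F : seq V -> rule_val) (M : seq V -> seq V -> Prop) : Prop :=
  forall p b, p != [::] -> is_seq (rcons p b) -> unmatched M p ->
    (forall v, st_ins M (rcons p b) (size p).-1 v <-> F (rcons p b) = Iota v) /\
    (st_del M (rcons p b) (size p).-1 <-> F (rcons p b) = Delta).

Definition valid_rule (F : seq V -> rule_val) : Prop :=
  (forall p a b v, is_seq (rcons (rcons p a) b) ->
     F (rcons (rcons p a) b) = Iota v ->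
     [/\ v != a, v != b, dist a v + dist v b = dist a b,
         F (rcons (rcons p a) v) = Eps &
         F (rcons (rcons (rcons p a) v) b) = Delta]) /\
  (forall p a m b, is_seq (p ++ [:: a; m; b]) ->
     F (p ++ [:: a; m; b]) = Delta ->
     dist a m + dist m b = dist a b /\ F (p ++ [:: a; b]) = Iota m).

Definition diagonal_rule (F : seq V -> rule_val) (M : seq V -> seq V -> Prop) : Prop :=
  forall p a b, is_seq (rcons (rcons p a) b) -> unmatched M (rcons p a) ->
    2 <= dist a b -> F (rcons (rcons p a) b) <> Eps.

End MagDefs.

From HB Require Import structures.
From mathcomp Require Import all_boot all_order all_algebra.
From mathcomp Require Import ring zify.
From Stdlib Require Import Relations ClassicalEpsilon Classical.
Set Implicit Arguments. Unset Strict Implicit. Unset Printing Implicit Defensive.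
Import Order.TTheory GRing.Theory Num.Theory.

(* If M is a Morse matching on the graph Γ of sequences and
       every sequence of I_{k,l} is matched, then MH_{k,l} = 0.  Given a cycle
       c, pick a support element x that is minimal for the reachability order
       of Γ^M (it exists because Γ^M is acyclic).  Minimality forbids x to be
       matched downwards; if x is matched upwards with y, subtracting a
       multiple of ∂y kills the coefficient of x and only adds sequences
       reachable from x, so the up-closure of the support shrinks and we
       conclude by induction.  This needs ∂∂ = 0, proved first.
   (2) Critical sequences.  If x is unmatched then so are its prefixes (M is
       a prefix matching), each one-step extension is assigned ε by F (M is
       generated by F), hence consecutive entries are at distance < 2 (F is
       diagonal); thus ℓ(x) = k for x ∈ I_{k,l} unmatched.
   For k ≠ l every sequence of I_{k,l} is therefore matched, and (1) applies. *)

Section Distance.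
Variables (V : finType) (e : rel V).

Local Notation grow := (fun S : {set V} => S :|: [set y | [exists z in S, e z y]]).

Lemma iter_grow_mono n (S T : {set V}) : S \subset T ->
  iter n grow S \subset iter n grow T.
Proof.
elim: n => //= n IH /IH{}IH.
apply/subsetP=> y; rewrite !inE => /orP[H|/existsP[z /andP[Hz Hzy]]].
  by rewrite (subsetP IH).
by apply/orP; right; apply/existsP; exists z; rewrite (subsetP IH).
Qed.

Lemma reach_trans m n x y z : y \in reach e m x -> z \in reach e n y ->
  z \in reach e (n + m) x.
Proof.
move=> Hy; rewrite /reach iterD; apply/subsetP; apply: iter_grow_mono.
by rewrite sub1set.
Qed.

Lemma dist_le_card x y : dist e x y <= #|V|.
Proof. by rewrite /dist -{2}(size_iota 0 #|V|) find_size. Qed.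

Lemma dist_reach x y : dist e x y < #|V| -> y \in reach e (dist e x y) x.
Proof.
rewrite /dist => H.
have Hh : has (fun n => y \in reach e n x) (iota 0 #|V|) by rewrite has_find size_iota.
by have := nth_find 0 Hh; rewrite nth_iota ?add0n.
Qed.

Lemma dist_min x y n : n < #|V| -> y \in reach e n x -> dist e x y <= n.
Proof.
move=> Hn Hy; rewrite leqNgt; apply/negP => Hlt.
by have := before_find 0 Hlt; rewrite nth_iota // add0n Hy.
Qed.

Lemma dist_refl x : dist e x x = 0.
Proof.
apply/eqP; rewrite -leqn0; apply: dist_min; last by rewrite /reach /= inE.
by apply/card_gt0P; exists x.
Qed.

Lemma dist_eq0 x y : dist e x y = 0 -> y = x.
Proof.
have Hcard : 0 < #|V| by apply/card_gt0P; exists x.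
by move=> H; have := @dist_reach x y; rewrite H /reach /= inE => /(_ Hcard)/eqP.
Qed.

Lemma dist_gt0 x y : x != y -> 0 < dist e x y.
Proof. by move=> Hxy; rewrite lt0n; apply: contraNneq Hxy => /dist_eq0 ->. Qed.

Lemma dist_triangle x y z : dist e x z <= dist e x y + dist e y z.
Proof.
have Hz := dist_le_card x z.
case: (ltnP (dist e x y) #|V|) => H1; last by lia.
case: (ltnP (dist e y z) #|V|) => H2; last by lia.
case: (ltnP (dist e x y + dist e y z) #|V|) => H3; last by lia.
by apply: dist_min => //; rewrite addnC; apply: reach_trans; exact: dist_reach.
Qed.

End Distance.

Section Deletion.
Variables (V : finType) (e : rel V).

Lemma del_cons0 (x : V) s : del (x :: s) 0 = s. Proof. by rewrite /del /= drop0. Qed.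
Lemma del_consS (x : V) s i : del (x :: s) i.+1 = x :: del s i. Proof. by []. Qed.
Lemma ell_cons2 (a b : V) s : ell e [:: a, b & s] = dist e a b + ell e (b :: s).
Proof. by []. Qed.
Lemma is_seq_cons2 (x y : V) s : is_seq [:: x, y & s] = (x != y) && is_seq (y :: s).
Proof. by []. Qed.

Lemma size_del (s : seq V) i : i < size s -> size (del s i) = (size s).-1.
Proof.
elim: s i => [|x s IH] [|i] //= H; first by rewrite del_cons0.
by rewrite IH //; case: s IH H.
Qed.

Lemma ell_del_le (s : seq V) i : 0 < i -> i.+1 < size s -> ell e (del s i) <= ell e s.
Proof.
elim: s i => [|x s IH] [|i] // _; case: s IH => [|y s] IH Hi //.
case: i Hi => [|j] Hi.
  case: s {IH} Hi => [|z r] Hi //.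
  by rewrite del_consS del_cons0 !ell_cons2 addnA leq_add2r dist_triangle.
rewrite del_consS del_consS !ell_cons2 leq_add2l.
by have := IH j.+1 isT Hi; rewrite del_consS.
Qed.

(* A length-preserving deletion of an interior entry yields again a sequence:
   if it created two equal neighbours, the length would drop. *)
Lemma del_is_seq (s : seq V) i : is_seq s -> 0 < i -> i.+1 < size s ->
  ell e (del s i) = ell e s -> is_seq (del s i).
Proof.
elim: s i => [|x s IH] [|i] // + _; case: s IH => [|y s] IH //.
rewrite is_seq_cons2 => /andP[Hxy Hs] Hi.
case: i Hi => [|j] Hi.
  case: s {IH} Hs Hi => [|z r] Hs Hi //.
  rewrite del_consS del_cons0 !ell_cons2 addnA => /addIn Hd.
  move: Hs; rewrite !is_seq_cons2 => /andP[Hyz ->]; rewrite andbT.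
  apply/negP => /eqP Exz; subst z; move: Hd; rewrite dist_refl.
  by have := dist_gt0 e Hxy; lia.
rewrite del_consS del_consS !ell_cons2 => /addnI Hd.
have := IH j.+1 Hs isT Hi; rewrite del_consS Hd => /(_ erefl) H.
by rewrite is_seq_cons2 Hxy H.
Qed.

Lemma del_del (s : seq V) i j : i < j -> del (del s j) i = del (del s i) j.-1.
Proof.
elim: s i j => [|x s IH] [|i] [|j] // H.
  by rewrite del_consS !del_cons0.
by case: j H => [|j] H //; rewrite !del_consS IH.
Qed.

Lemma del_inj (s : seq V) i j : is_seq s -> i < size s -> j < size s ->
  del s i = del s j -> i = j.
Proof.
elim: s i j => [|x s IH] [|i] [|j] //; case: s IH => [|y s] // IH;
  rewrite is_seq_cons2 => /andP[Hxy Hs] Hi Hj.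
- by rewrite del_consS del_cons0 => -[E]; rewrite E eqxx in Hxy.
- by rewrite del_consS del_cons0 => -[E]; rewrite E eqxx in Hxy.
- by rewrite !del_consS => -[E]; congr S; exact: IH.
Qed.

Lemma ins_del (y : seq V) i x0 : 0 < i -> i < size y ->
  ins (del y i) i.-1 (nth x0 y i) = y.
Proof.
case: i => [|i] // _ Hi; rewrite /ins /del /=.
have Hs : size (take i.+1 y) = i.+1 by rewrite size_take Hi.
by rewrite (take_size_cat _ Hs) (drop_size_cat _ Hs) -(drop_nth x0 Hi) cat_take_drop.
Qed.

Lemma ell_rcons (x : V) s b :
  ell e (rcons (x :: s) b) = ell e (x :: s) + dist e (last x s) b.
Proof. by rewrite rcons_cons /ell -cats1 pairmap_cat sumn_cat /= addn0. Qed.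

Lemma is_seq_rcons (x : V) s b :
  is_seq (rcons (x :: s) b) = is_seq (x :: s) && (last x s != b).
Proof. by rewrite rcons_cons /is_seq rcons_path. Qed.

End Deletion.

Section Chains.
Variables (V : finType) (e : rel V).

Lemma mem_Iseq k l x :
  (x \in Iseq e k l) = [&& is_seq x, size x == k.+1 & ell e x == l].
Proof.
have Hsize : (x \in map (@tval k.+1 V) (enum {: k.+1.-tuple V})) = (size x == k.+1).
  apply/mapP/idP => [[t _ ->]|/eqP H]; first by rewrite size_tuple.
  by exists (Tuple (introT eqP H)); rewrite ?mem_enum.
by rewrite /Iseq mem_filter Hsize; case: (is_seq x); case: (size x == k.+1); case: (ell e x == l).
Qed.

Lemma uniq_Iseq k l : uniq (Iseq e k l).
Proof. by apply: filter_uniq; rewrite map_inj_uniq ?enum_uniq //; exact: val_inj. Qed.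

Lemma face_mem k l x j z : x \in Iseq e k.+1 l -> 0 < j -> j < k.+1 ->
  face e x j z -> z \in Iseq e k l.
Proof.
rewrite !mem_Iseq => /and3P[Hs /eqP Hsz /eqP Hl] Hj Hjk /andP[/eqP He /eqP <-].
have Hj' : j.+1 < size x by rewrite Hsz ltnS.
rewrite (del_is_seq Hs Hj Hj' He) size_del ?Hsz; last by lia.
by rewrite He Hl !eqxx.
Qed.

Local Open Scope ring_scope.

(* The incidence number [y : z], i.e. the coefficient of z in ∂y. *)
Definition incidence (y z : seq V) : int :=
  \sum_(1 <= j < (size y).-1) (-1) ^+ j * (face e y j z)%:R.

Lemma bdry_incidence k l c z :
  bdry e k l c z = \sum_(x <- Iseq e k l) c x * incidence x z.
Proof.
rewrite /bdry !big_seq; apply: eq_bigr => x; rewrite mem_Iseq => /and3P[_ /eqP Hs _].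
by rewrite /incidence Hs /= mulr_sumr; apply: eq_bigr => i _; ring.
Qed.

Lemma bdry_lin k l (a b : seq V -> int) r w :
  bdry e k l (fun z => a z + r * b z) w = bdry e k l a w + r * bdry e k l b w.
Proof.
rewrite /bdry mulr_sumr -big_split; apply: eq_bigr => x _.
by rewrite mulr_sumr -big_split; apply: eq_bigr => i _ /=; ring.
Qed.

Lemma bdry0 k l w : bdry e k l (fun _ => 0) w = 0.
Proof. by rewrite /bdry big1 // => x _; rewrite big1 // => i _; rewrite mulr0 mul0r. Qed.

Lemma bdry_point k l y z : y \in Iseq e k.+1 l ->
  bdry e k.+1 l (fun w => (w == y)%:R) z = incidence y z.
Proof.
move=> Hy; rewrite bdry_incidence (bigD1_seq y Hy (uniq_Iseq _ _)) /= eqxx mul1r.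
by rewrite big1_seq ?addr0 // => x /andP[/negbTE -> _]; rewrite mul0r.
Qed.

(* A face of a sequence occurs at a single index, so its incidence is a sign. *)
Lemma incidence_face y i x : is_seq y -> (0 < i)%N -> (i.+1 < size y)%N ->
  face e y i x -> incidence y x = (-1) ^+ i.
Proof.
move=> Hs Hi0 Hi Hf; rewrite /incidence.
have Hm : i \in index_iota 1 (size y).-1 by rewrite mem_index_iota Hi0 /=; lia.
rewrite (bigD1_seq i Hm (iota_uniq _ _)) /= Hf big1_seq ?addr0 ?mulr1 //.
move=> j /andP[Hji]; rewrite mem_index_iota => /andP[Hj0 Hj].
case Hfj: (face e y j x); last by rewrite mulr0.
move: Hf Hfj => /andP[_ /eqP E1] /andP[_ /eqP E2].
have Eij : i = j by apply: (del_inj Hs); [lia | lia | rewrite E1 E2].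
by rewrite Eij eqxx in Hji.
Qed.

Lemma incidence_nz_face y z : incidence y z != 0 ->
  exists j, [/\ (0 < j)%N, (j.+1 < size y)%N & face e y j z].
Proof.
move=> H; have [/hasP[j]|/hasPn Hno] :=
  boolP (has (fun j => face e y j z) (index_iota 1 (size y).-1)).
  by rewrite mem_index_iota => /andP[Hj0 Hj] Hf; exists j; split => //; lia.
case/negP: H; rewrite /incidence big1_seq // => j /andP[_ /Hno/negbTE ->].
by rewrite mulr0.
Qed.

End Chains.

(* The cancellation pattern behind ∂∂ = 0: a square array whose entries just
   below and above the diagonal cancel in pairs sums to zero. *)
Lemma sum_skew_array (R : zmodType) (f : nat -> nat -> R) n :
  (forall a b, (b <= a)%N -> (a < n)%N -> f a.+1 b = (- f b a)%R) ->
  (\sum_(0 <= a < n.+1) \sum_(0 <= b < n) f a b = 0)%R.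
Proof.
elim: n => [|n IH] Hf; first by rewrite big1 // => a _; rewrite big_geq.
under eq_bigr => a _ do rewrite big_nat_recr //=.
rewrite big_split /= big_nat_recr //= IH => [|a b Hba Ha]; last by apply: Hf; lia.
rewrite add0r big_nat_recr //= addrCA -big_nat_recr //= addrC -big_split /=.
by rewrite big1_seq // => b /andP[_]; rewrite mem_index_iota => /andP[_ Hb]; rewrite Hf ?addNr.
Qed.

Section BoundarySquare.
Variables (V : finType) (e : rel V).
Local Open Scope ring_scope.

Lemma sum_face k l y j (g : seq V -> int) : y \in Iseq e k.+1 l ->
  (0 < j)%N -> (j < k.+1)%N ->
  \sum_(z <- Iseq e k l) (face e y j z)%:R * g z =
  (ell e (del y j) == ell e y)%:R * g (del y j).
Proof.
move=> Hy Hj0 Hj.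
case Hl: (ell e (del y j) == ell e y); last first.
  by rewrite mul0r big1_seq // => z _; rewrite /face Hl mul0r.
have Hf : face e y j (del y j) by rewrite /face Hl eqxx.
rewrite (bigD1_seq _ (face_mem Hy Hj0 Hj Hf) (uniq_Iseq _ _ _)) /= Hf big1_seq ?addr0 //.
by move=> z /andP[Hz _]; rewrite /face Hl /= eq_sym (negbTE Hz) mul0r.
Qed.

Definition double_face (y w : seq V) (j i : nat) : int :=
  (ell e (del y j) == ell e y)%:R * (face e (del y j) i w)%:R.

(* Since deletions never increase the length, double_face only depends on
   the final length and result, hence is symmetric under commuting deletions. *)
Lemma double_faceE y w j i : (0 < j)%N -> (j.+1 < size y)%N ->
  (0 < i)%N -> (i.+2 < size y)%N ->
  double_face y w j i = ((ell e (del (del y j) i) == ell e y) && (del (del y j) i == w))%:R.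
Proof.
move=> Hj0 Hj Hi0 Hi; rewrite /double_face /face.
have Hi' : (i.+1 < size (del y j))%N by rewrite size_del; lia.
case: eqP => [->|Hl]; first by rewrite mul1r.
rewrite mul0r; case: eqP => // Hl2; exfalso; apply: Hl; apply/eqP.
by rewrite eqn_leq ell_del_le //= -Hl2 ell_del_le.
Qed.

(* ∂∂ = 0 on the elementary chain of a sequence y: the two-step faces of y
   obtained by deleting indices j then i, and i then j-1, cancel. *)
Lemma bdry_incidence0 k l y w : y \in Iseq e k.+1 l -> bdry e k l (incidence e y) w = 0.
Proof.
move=> Hy; have := Hy; rewrite mem_Iseq => /and3P[Hs /eqP Hsz _].
case: k Hy Hsz => [|n] Hy Hsz; first by rewrite /bdry big1 // => z _; rewrite big_geq.
have Hrow i : \sum_(z <- Iseq e n.+1 l) (-1) ^+ i * incidence e y z * (face e z i w)%:R =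
    \sum_(1 <= j < n.+2) (-1) ^+ i * (-1) ^+ j * double_face y w j i.
  under eq_bigr => z _ do rewrite /incidence Hsz /= mulr_sumr mulr_suml.
  rewrite exchange_big /=; apply: eq_big_nat => j /andP[Hj0 Hj].
  transitivity (\sum_(z <- Iseq e n.+1 l)
      ((face e y j z)%:R : int) * ((-1) ^+ i * (-1) ^+ j * (face e z i w)%:R)).
    by apply: eq_bigr => z _; ring.
  by rewrite (sum_face _ Hy Hj0 Hj) /double_face; ring.
rewrite /bdry exchange_big /=; under eq_bigr => i _ do rewrite Hrow.
rewrite big_add1 /=; under eq_bigr => i _ do rewrite big_add1 /=.
rewrite exchange_big /=; apply: sum_skew_array => a b Hba Ha.
have -> : double_face y w a.+2 b.+1 = double_face y w b.+1 a.+1.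
  rewrite !double_faceE ?Hsz //; try lia.
  by rewrite (@del_del _ y b.+1 a.+2).
by rewrite (exprS _ a.+1); ring.
Qed.

End BoundarySquare.

Definition pbool (P : Prop) : bool := if excluded_middle_informative P then true else false.

Lemma pboolP (P : Prop) : reflect P (pbool P).
Proof. by rewrite /pbool; case: excluded_middle_informative => H; constructor. Qed.

Lemma count_lt_sub (T : eqType) (p q : pred T) s x : (forall y, p y -> q y) ->
  x \in s -> q x -> ~~ p x -> count p s < count q s.
Proof.
move=> Hpq; elim: s => [|y s IH] //; rewrite inE => /orP[/eqP <-|Hx] Hq Hp /=.
  by rewrite (negbTE Hp) Hq add0n add1n ltnS sub_count.
have := IH Hx Hq Hp; have : p y <= q y by case Hy: (p y) => //; rewrite (Hpq _ Hy).
lia.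
Qed.

Lemma clos_trans_walk (A : Type) (R : relation A) a b : clos_trans A R a b ->
  exists n (f : nat -> A), [/\ 0 < n, f 0 = a, f n = b &
    forall i, i < n -> R (f i) (f i.+1)].
Proof.
move=> H; apply clos_trans_t1n in H; elim: H => [x y Hxy|x y z Hxy _ [n [f [Hn H0 Hn' Hs]]]].
  by exists 1, (fun i => if i is 0 then x else y); split => // -[].
exists n.+1, (fun i => if i is j.+1 then f j else x); split => // -[|i] Hi //.
  by rewrite H0.
exact: Hs.
Qed.

Section MorseMatching.
Variables (V : finType) (e : rel V) (M : seq V -> seq V -> Prop).
Hypothesis HM : is_matching e M.
Hypothesis HMorse : is_Morse e M.

Local Notation R := (clos_trans (seq V) (GammaM e M)).

Lemma walk_irrefl x : ~ R x x.
Proof.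
move=> Hxx; have [n [f [Hn H0 Hn' Hs]]] := clos_trans_walk Hxx; apply: HMorse.
by exists n, f; split => //; split => //; rewrite Hn' H0.
Qed.

Lemma exists_minimal (P : seq V -> Prop) (s : seq (seq V)) :
  (forall x, P x -> x \in s) -> (exists x, P x) ->
  exists x, P x /\ forall x', P x' -> ~ R x' x.
Proof.
move=> Hs [x Px]; have [n] := ubnP (count (fun y => pbool (R y x)) s).
elim: n x Px => // n IH x Px Hn.
have [[x' [Px' Rx'x]]|Hmin] := classic (exists x', P x' /\ R x' x); last first.
  by exists x; split => // x' Px' Rx'x; apply: Hmin; exists x'.
apply: (IH x' Px'); suff: count (fun y => pbool (R y x')) s < count (fun y => pbool (R y x)) s.
  by lia.
apply: count_lt_sub (Hs _ Px') _ _.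
- by move=> y /pboolP Ry; apply/pboolP; exact: t_trans Ry Rx'x.
- exact/pboolP.
- by apply/pboolP; exact: walk_irrefl.
Qed.

Local Open Scope ring_scope.

Lemma Gamma_incidence x z : is_seq x -> incidence e x z != 0 -> Gamma e x z.
Proof. by move=> Hx /incidence_nz_face [j [Hj0 Hj Hf]]; split => //; exists j. Qed.

Definition upper (c : seq V -> int) (z : seq V) : Prop :=
  exists2 x0, c x0 != 0 & (x0 = z \/ R x0 z).

Lemma upper_count_lt (s : seq (seq V)) (c c' : seq V -> int) x : x \in s ->
  c x != 0 -> c' x = 0 -> (forall x', c x' != 0 -> ~ R x' x) ->
  (forall z, c' z != 0 -> c z != 0 \/ R x z) ->
  (count (fun z => pbool (upper c' z)) s < count (fun z => pbool (upper c z)) s)%N.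
Proof.
move=> Hxs Hx Hx' Hmin Hsupp; apply: count_lt_sub Hxs _ _.
- move=> z /pboolP [x0 H0 Hr]; apply/pboolP; case: (Hsupp x0 H0) => [Hc0|Rxx0].
    by exists x0.
  by exists x => //; right; case: Hr => [<-|Hr] //; exact: t_trans Rxx0 Hr.
- by apply/pboolP; exists x => //; left.
- apply/pboolP => -[x0 H0 [E|Rx0x]]; first by rewrite E Hx' eqxx in H0.
  case: (Hsupp x0 H0) => [Hc0|Rxx0]; first exact: Hmin Hc0 Rx0x.
  by apply: (@walk_irrefl x); apply: t_trans Rxx0 Rx0x.
Qed.

(* An R-minimal support element x of a cycle is not matched downwards: the
   coefficient ±c(x) of its partner y in ∂c must be cancelled by some other
   x' in the support, and x' → y → x is a path in Γ^M. *)
Lemma minimal_not_matched_down k l c x y :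
  supported e k l c -> (forall w, bdry e k l c w = 0) ->
  c x != 0 -> (forall x', c x' != 0 -> ~ R x' x) -> ~ M x y.
Proof.
move=> Hs Hz Hx Hmin Mxy; have [Hxs [i [Hi0 [Hi Hf]]]] := HM.1 _ _ Mxy.
have [x' Hx'x Hnz] : exists2 x', x' != x & c x' * incidence e x' y != 0.
  apply: NNPP => Hno; move: (Hz y).
  rewrite bdry_incidence (bigD1_seq x (Hs x Hx) (uniq_Iseq _ _ _)) /=.
  rewrite (incidence_face Hxs Hi0 Hi Hf) big1_seq ?addr0 => [/eqP|x' /andP[Hx'x _]].
    by rewrite mulf_eq0 signr_eq0 orbF; exact/negP.
  by apply/eqP/negPn/negP => H; apply: Hno; exists x'.
have Hcx' : c x' != 0 by apply: contraNneq Hnz => ->; rewrite mul0r.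
have Hx'y : incidence e x' y != 0 by apply: contraNneq Hnz => ->; rewrite mulr0.
have := Hs x' Hcx'; rewrite mem_Iseq => /and3P[Hx's _ _].
apply: (Hmin x' Hcx'); apply: (t_trans _ _ _ y); apply: t_step; last by right.
left; split; first exact: Gamma_incidence.
move=> Mx'y; have [Exx' _] := HM.2 _ _ _ _ Mxy Mx'y (or_intror (or_intror (or_intror erefl))).
by rewrite Exx' eqxx in Hx'x.
Qed.

(* If instead the R-minimal support element x is matched upwards with y,
   c' = c - t ∂y (for the right multiple t) is a cycle vanishing at x whose
   support only adds faces of y, which lie above x; so its up-closure is
   strictly smaller. *)
Lemma cancel_matched_up k l c x y :
  supported e k l c -> (forall w, bdry e k l c w = 0) ->
  c x != 0 -> (forall x', c x' != 0 -> ~ R x' x) -> M y x ->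
  exists (c' : seq V -> int) (t : int), [/\ supported e k l c',
    forall w, bdry e k l c' w = 0,
    (count (fun z => pbool (upper c' z)) (Iseq e k l) <
       count (fun z => pbool (upper c z)) (Iseq e k l))%N,
    y \in Iseq e k.+1 l & forall w, c w = c' w + t * incidence e y w].
Proof.
move=> Hs Hz Hx Hmin Myx; have [Hys [i [Hi0 [Hi Hf]]]] := HM.1 _ _ Myx.
have HyX : y \in Iseq e k.+1 l.
  move: (Hs x Hx) (Hf); rewrite !mem_Iseq /face => /and3P[_ /eqP Hsz /eqP Hl].
  move=> /andP[/eqP Hel /eqP Hdel]; move: Hsz; rewrite -Hdel size_del ?(ltnW Hi) //.
  by rewrite Hys -Hel Hdel Hl eqxx andbT /= => Hsz; apply/eqP; lia.
set t := c x * (-1) ^+ i; pose c' z := c z + (- t) * incidence e y z.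
have Hc'x : c' x = 0.
  rewrite /c' (incidence_face Hys Hi0 Hi Hf) /t mulNr -mulrA -exprMn mulrNN mulr1.
  by rewrite expr1n mulr1 subrr.
have Hsupp z : c' z != 0 -> c z != 0 \/ incidence e y z != 0.
  rewrite /c'; case: (eqVneq (c z) 0) => [->|]; last by left.
  by rewrite add0r mulf_eq0 negb_or => /andP[_]; right.
exists c', t; split.
- move=> z /Hsupp [/Hs //|/incidence_nz_face [j [Hj0 Hj Hfj]]].
  have := HyX; rewrite mem_Iseq => /and3P[_ /eqP Hsz _].
  by apply: (face_mem HyX Hj0 _ Hfj); rewrite -ltnS -Hsz.
- by move=> w; rewrite /c' bdry_lin Hz bdry_incidence0 // mulr0 addr0.
- apply: (upper_count_lt (Hs x Hx) Hx Hc'x Hmin) => z /[dup] Hz' /Hsupp [Hcz|Hyz]; first by left.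
  right; apply: (t_trans _ _ _ y); apply: t_step; first by right.
  left; split; first exact: Gamma_incidence.
  move=> Myz; have [_ Exz] := HM.2 _ _ _ _ Myx Myz (or_introl erefl).
  by move: Hz'; rewrite -Exz Hc'x eqxx.
- exact: HyX.
- by move=> w; rewrite /c' mulNr subrK.
Qed.

(* Morse lemma: if every sequence of I_{k,l} is matched, MH_{k,l} vanishes.
   Induction on the size of the up-closure of the support of the cycle. *)
Lemma matched_MH_vanishes k l :
  (forall x, x \in Iseq e k l -> exists y, M x y \/ M y x) -> MH_vanishes e k l.
Proof.
move=> Hmat c; have [n] := ubnP (count (fun z => pbool (upper c z)) (Iseq e k l)).
elim: n c => // n IH c Hn Hs Hz.
have [[x0 Hx0]|Hc0] := classic (exists x, c x != 0); last first.
  exists (fun _ => 0); split => [x|y]; first by rewrite eqxx.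
  by rewrite bdry0; apply/esym/eqP/negPn/negP => Hy; apply: Hc0; exists y.
have [x [Hx Hmin]] := exists_minimal Hs (ex_intro _ x0 Hx0).
have [y [Mxy|Myx]] := Hmat x (Hs x Hx).
  by case: (minimal_not_matched_down Hs Hz Hx Hmin Mxy).
have [c' [t [Hs' Hz' Hlt HyX Hc]]] := cancel_matched_up Hs Hz Hx Hmin Myx.
have [b [Hb Hbc]] := IH c' (leq_trans Hlt Hn) Hs' Hz'.
exists (fun w => b w + t * (w == y)%:R); split.
  by move=> w; case: (eqVneq w y) => [->|_] // ; rewrite mulr0 addr0 => /Hb.
by move=> w; rewrite bdry_lin Hbc bdry_point // Hc.
Qed.
End MorseMatching.

Section CriticalSequences.
Variables (V : finType) (e : rel V) (F : seq V -> rule_val V) (M : seq V -> seq V -> Prop).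
Hypothesis HM : is_matching e M.
Hypothesis Hpre : prefix_matching M.
Hypothesis Hgen : generated_by F M.
Hypothesis Hdiag : diagonal_rule e F M.

(* Prefixes of unmatched sequences are unmatched: a matching state of the
   prefix would be inherited by the extension, M being a prefix matching. *)
Lemma unmatched_prefix p b : p != [::] -> is_seq (rcons p b) ->
  unmatched M (rcons p b) -> unmatched M p.
Proof.
case: p => [|a s] // _ Hs Hu.
have Hps : is_seq (a :: s) by move: Hs; rewrite is_seq_rcons => /andP[].
have Hsz : size (rcons (a :: s) b) = (size (a :: s)).+1 by rewrite size_rcons.
move=> y; split => Hm.
- have [_ [i [Hi0 [Hi /andP[_ /eqP Hd]]]]] := HM.1 _ _ Hm.
  have Hst : st_del M (a :: s) i by split => //; split => //; rewrite Hd.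
  have Ht : take i.+2 (rcons (a :: s) b) = take i.+2 (a :: s) by rewrite -cats1 takel_cat.
  have Hb : i.+2 <= size (rcons (a :: s) b) by rewrite Hsz ltnS ltnW.
  have [_ [_ Hm2]] := Hpre.2 _ _ Hps Hst _ Hs Hb Ht.
  by case: (Hu (del (rcons (a :: s) b) i)) => H _; apply: H.
- have [Hys [j [Hj0 [Hj /andP[_ /eqP Hd]]]]] := HM.1 _ _ Hm.
  have Hsd : size (a :: s) = (size y).-1 by rewrite -Hd size_del // ltnW.
  have Hst : st_ins M (a :: s) j.-1 (nth b y j).
    by split; [rewrite Hsd; lia | rewrite -Hd ins_del ?Hd // ltnW].
  have Ht : take j.-1.+2 (rcons (a :: s) b) = take j.-1.+2 (a :: s).
    by rewrite -cats1 takel_cat // Hsd; lia.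
  have Hb : j.-1.+2 <= size (rcons (a :: s) b) by rewrite Hsz Hsd; lia.
  have [_ Hm2] := Hpre.1 _ _ _ Hps Hst _ Hs Hb Ht.
  by case: (Hu (ins (rcons (a :: s) b) j.-1 (nth b y j))) => _ H; apply: H.
Qed.

(* The rule assigns ε to an unmatched sequence whose prefix is unmatched:
   any other value would match it, M being generated by F. *)
Lemma unmatched_rule_eps p b : p != [::] -> is_seq (rcons p b) ->
  unmatched M p -> unmatched M (rcons p b) -> F (rcons p b) = Eps V.
Proof.
move=> Hp Hs Hpu Hu; have [Hins Hdel] := Hgen Hp Hs Hpu.
case Hf: (F (rcons p b)) => [|v|] //.
- have [_ Hm] := (Hins v).2 Hf.
  by case: (Hu (ins (rcons p b) (size p).-1 v)) => _ /(_ Hm).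
- have [_ [_ Hm]] := Hdel.2 Hf.
  by case: (Hu (del (rcons p b) (size p).-1)) => /(_ Hm).
Qed.

(* Critical sequences are diagonal: consecutive entries of an unmatched
   sequence are adjacent, as F is diagonal, so ℓ(x) = k for x ∈ I_{k,l}. *)
Lemma unmatched_ell x : is_seq x -> unmatched M x -> ell e x = (size x).-1.
Proof.
elim/last_ind: x => [|p b IH] // Hs Hu; case: p IH Hs Hu => [|a s] // IH Hs Hu.
move: (Hs); rewrite is_seq_rcons => /andP[Hps Hab].
have Hpu := unmatched_prefix (p := a :: s) isT Hs Hu.
have Heps := unmatched_rule_eps (p := a :: s) isT Hs Hpu Hu.
have Hd : dist e (last a s) b < 2.
  rewrite ltnNge; apply/negP => H2.
  have := Hdiag (p := belast a s) (a := last a s) (b := b).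
  by rewrite -lastI => /(_ Hs Hpu H2 Heps).
have := dist_gt0 e Hab.
by rewrite ell_rcons IH // size_rcons /=; lia.
Qed.

End CriticalSequences.

Theorem corollary3p6 (V : finType) (e : rel V)
  (Hsimple : simple_graph e) (Hconn : connected_graph e)
  (F : seq V -> rule_val V) (M : seq V -> seq V -> Prop) :
  valid_rule e F -> diagonal_rule e F M ->
  is_matching e M -> prefix_matching M -> generated_by F M ->
  is_Morse e M -> diagonal_graph e.
Proof.
move=> _ Hdiag HM Hpre Hgen HMorse k l Hkl.
apply: (matched_MH_vanishes HM HMorse) => x.
rewrite mem_Iseq => /and3P[Hs /eqP Hsz /eqP Hl].
apply: NNPP => Hno; apply: Hkl.
have Hu : unmatched M x by move=> y; split => H; apply: Hno; exists y; [left|right].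
by have := unmatched_ell HM Hpre Hgen Hdiag Hs Hu; rewrite Hsz Hl.
Qed.
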